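(* (Cutfree completeness.) For all finite multisets of formulas $\Gamma,\Delta$: if $\Gamma\models\bigvee\Delta$, then $\vdash_{\mathsf{GT}^-}\Gamma\Rightarrow\Delta$.
   Context: Fix a countably infinite set $\mathsf{Prop}$ of propositional variables. Classical formulas are generated by $\alpha ::= p \mid \bot \mid \neg\alpha \mid \alpha\wedge\alpha \mid \alpha\vee\alpha$ with $p\in\mathsf{Prop}$. Formulas are generated by $\phi ::= \alpha \mid \phi\wedge\phi \mid \phi\vee\phi \mid \phi\mathbin{\backslash\!\!/}\phi$ where $\alpha$ is classical ($\vee$: split disjunction, $\mathbin{\backslash\!\!/}$: inquisitive disjunction). A team with domain $X\subseteq\mathsf{Prop}$ is a set $t\subseteq 2^X$ of valuations. For a team $t$ whose domain contains the variables of the formula: $t\models p$ iff $v(p)=1$ for all $v\in t$; $t\models\bot$ iff $t=\emptyset$; $t\models\neg\alpha$ iff $\{v\}\not\models\alpha$ for all $v\in t$; $t\models\phi\wedge\psi$ iff both hold; $t\models\phi\vee\psi$ iff there are $s,u\subseteq t$ with $t=s\cup u$, $s\models\phi$, $u\models\psi$; $t\models\phi\mathbin{\backslash\!\!/}\psi$ iff $t\models\phi$ or $t\models\psi$. $\Gamma\models\phi$ means every team satisfying all members of the multiset $\Gamma$ satisfies $\phi$. $\bigvee\emptyset:=\bot$. A sequent is $\Gamma\Rightarrow\Delta$ with $\Gamma,\Delta$ finite multisets; ''$\Gamma,\Delta$'' is multiset union. Deep-inference notation: for a formula $\chi$ with a designated occurrence of a subformula not in the scope of any negation, $\chi\{\eta\}$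 denotes the result of replacing that occurrence by $\eta$. The cut-free calculus $\mathsf{GT}^-$ ($\alpha$ ranges over classical formulas, $\Lambda$ over multisets of classical formulas): axioms $\Gamma,p\Rightarrow p,\Delta$ and $\Gamma,\bot\Rightarrow\Delta$; (L$\neg$) from $\Gamma\Rightarrow\alpha,\Delta$ infer $\Gamma,\neg\alpha\Rightarrow\Delta$; (R$\neg$) from $\Gamma,\alpha\Rightarrow\Delta$ infer $\Gamma\Rightarrow\neg\alpha,\Delta$; (L$\wedge$) from $\Gamma,\phi,\psi\Rightarrow\Delta$ infer $\Gamma,\phi\wedge\psi\Rightarrow\Delta$; (R$\wedge$) from $\Gamma\Rightarrow\phi,\Lambda$ and $\Gamma\Rightarrow\psi,\Lambda$ infer $\Gamma\Rightarrow\phi\wedge\psi,\Lambda,\Delta$; (L$\vee$) from $\Gamma,\phi\Rightarrow\Lambda$ and $\Gamma,\psi\Rightarrow\Lambda$ infer $\Gamma,\phi\vee\psi\Rightarrow\Lambda,\Delta$; (R$\vee$) from $\Gamma\Rightarrow\phi,\psi,\Delta$ infer $\Gamma\Rightarrow\phi\vee\psi,\Delta$; (L$\mathbin{\backslash\!\!/}$) from $\Gamma,\chi\{\phi_L\}\Rightarrow\Delta$ and $\Gamma,\chi\{\phi_R\}\Rightarrow\Delta$ infer $\Gamma,\chi\{\phi_L\mathbin{\backslash\!\!/}\phi_R\}\Rightarrow\Delta$; (R$\mathbin{\backslash\!\!/}$) from $\Gamma\Rightarrow\chi\{\phi_i\},\Delta$ ($i\in\{L,R\}$) infer $\Gamma\Rightarrow\chi\{\phi_L\mathbin{\backslash\!\!/}\phi_R\},\Delta$.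 $\vdash_{\mathsf{GT}^-}$ denotes derivability in $\mathsf{GT}^-$. *)

From Stdlib Require Import List Permutation.
Import ListNotations.

Inductive form : Type :=
| Var : nat -> form
| Bot : form
| Neg : form -> form
| And : form -> form -> form
| Or  : form -> form -> form
| Inq : form -> form -> form.

Fixpoint classical (f : form) : Prop :=
  match f with
  | Var _ | Bot => True
  | Neg a => classical a
  | And a b | Or a b => classical a /\ classical b
  | Inq _ _ => False
  end.

Fixpoint wf (f : form) : Prop :=
  match f with
  | Var _ | Bot => True
  | Neg a => classical a
  | And a b | Or a b | Inq a b => wf a /\ wf b
  end.

Fixpoint vars (f : form) : list nat :=
  match f with
  | Var p => [p]
  | Bot => []
  | Neg a => vars a
  | And a b | Or a b | Inq a b => vars a ++ vars b
  end.

Definition valuation := nat -> bool.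
Definition team := valuation -> Prop.

(* t is a team with domain X, i.e. t is a subset of 2^X; an element of 2^X
   is represented canonically by a total valuation that is false outside X. *)
Definition team_on (X : nat -> Prop) (t : team) : Prop :=
  forall v, t v -> forall p, ~ X p -> v p = false.

Fixpoint sat (t : team) (f : form) : Prop :=
  match f with
  | Var p => forall v, t v -> v p = true
  | Bot => forall v, ~ t v
  | Neg a => forall v, t v -> ~ sat (fun w => w = v) a
  | And a b => sat t a /\ sat t b
  | Or a b => exists s u : team,
      (forall v, t v <-> (s v \/ u v)) /\ sat s a /\ sat u b
  | Inq a b => sat t a \/ sat t b
  end.

Definition entails (G : list form) (f : form) : Prop :=
  forall (X : nat -> Prop) (t : team),
    team_on X t ->
    (forall g, In g (f :: G) -> forall p, In p (vars g) -> X p) ->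
    (forall g, In g G -> sat t g) ->
    sat t f.

Fixpoint bigvee (D : list form) : form :=
  match D with
  | [] => Bot
  | [a] => a
  | a :: l => Or a (bigvee l)
  end.

(* deep-inference contexts: a hole not in the scope of any negation *)
Inductive ctx : Type :=
| Hole : ctx
| CAndL : ctx -> form -> ctx
| CAndR : form -> ctx -> ctx
| COrL : ctx -> form -> ctx
| COrR : form -> ctx -> ctx
| CInqL : ctx -> form -> ctx
| CInqR : form -> ctx -> ctx.

Fixpoint fill (c : ctx) (e : form) : form :=
  match c with
  | Hole => e
  | CAndL c f => And (fill c e) f
  | CAndR f c => And f (fill c e)
  | COrL c f => Or (fill c e) f
  | COrR f c => Or f (fill c e)
  | CInqL c f => Inq (fill c e) f
  | CInqR f c => Inq f (fill c e)
  end.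

Definition all_classical (L : list form) : Prop := forall a, In a L -> classical a.

(* Sequents Gamma => Delta with multisets represented as lists up to
   permutation (rule [gt_perm]). *)
Inductive GT : list form -> list form -> Prop :=
| gt_perm : forall G D G' D', GT G D -> Permutation G G' -> Permutation D D' -> GT G' D'
| gt_ax : forall G D p, GT (Var p :: G) (Var p :: D)
| gt_bot : forall G D, GT (Bot :: G) D
| gt_negL : forall G D a, classical a -> GT G (a :: D) -> GT (Neg a :: G) D
| gt_negR : forall G D a, classical a -> GT (a :: G) D -> GT G (Neg a :: D)
| gt_andL : forall G D f g, GT (f :: g :: G) D -> GT (And f g :: G) D
| gt_andR : forall G L D f g, all_classical L ->
    GT G (f :: L) -> GT G (g :: L) -> GT G (And f g :: L ++ D)
| gt_orL : forall G L D f g, all_classical L ->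
    GT (f :: G) L -> GT (g :: G) L -> GT (Or f g :: G) (L ++ D)
| gt_orR : forall G D f g, GT G (f :: g :: D) -> GT G (Or f g :: D)
| gt_inqL : forall G D (c : ctx) fL fR,
    GT (fill c fL :: G) D -> GT (fill c fR :: G) D -> GT (fill c (Inq fL fR) :: G) D
| gt_inqR1 : forall G D (c : ctx) fL fR,
    GT G (fill c fL :: D) -> GT G (fill c (Inq fL fR) :: D)
| gt_inqR2 : forall G D (c : ctx) fL fR,
    GT G (fill c fR :: D) -> GT G (fill c (Inq fL fR) :: D).

(* Completeness by backward proof search in which every rule is read as a
   semantic invariance. Inquisitive disjunctions in the antecedent are split
   by (L\\/): a team satisfying fill c (a \\/ b) satisfies fill c a or fill c b.
   Once the antecedent G is classical it is flat, so the teams satisfying G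
   are exactly the subteams of the single largest one; splitting that team
   along the succedent decides which alternative of an inquisitive
   disjunction on the right to keep, and downward closure transfers the
   choice to every smaller team. A valid classical sequent is then valid
   valuation by valuation, every classical rule is invertible for that
   reading, and the atomic leaves are axioms: otherwise the valuation making
   exactly the antecedent atoms true would be a countermodel. Premises are
   smaller than conclusions, so the search terminates. *)

From Stdlib Require Import List Permutation Arith Lia Classical.
Import ListNotations.

Definition single (v : valuation) : team := fun w => w = v.

Lemma sat_subteam f t t' : sat t f -> (forall v, t' v -> t v) -> sat t' f.
Proof.
  revert t t'; induction f; simpl; intros t t' Ht Hsub.
  - intros v Hv; apply Ht, Hsub, Hv.
  - intros v Hv; apply (Ht v), Hsub, Hv.
  - intros v Hv; apply Ht, Hsub, Hv.
  - destruct Ht; split; eauto.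
  - destruct Ht as [s [u [Hsu [Hs Hu]]]].
    exists (fun v => s v /\ t' v), (fun v => u v /\ t' v); split; [|split].
    + intros v; split; [|intros [[]|[]]; auto].
      intros Hv; destruct (proj1 (Hsu v) (Hsub v Hv)); tauto.
    + apply (IHf1 s); [exact Hs|]; tauto.
    + apply (IHf2 u); [exact Hu|]; tauto.
  - destruct Ht; [left|right]; eauto.
Qed.

Lemma sat_empty f t : (forall v, ~ t v) -> sat t f.
Proof.
  revert t; induction f; simpl; intros t Ht.
  - intros v Hv; contradiction (Ht v).
  - exact Ht.
  - intros v Hv; contradiction (Ht v).
  - split; auto.
  - exists t, t; split; [intros v; tauto|split; auto].
  - left; auto.
Qed.

Lemma sat_single_subteam f v t : sat t f -> t v -> sat (single v) f.
Proof. intros Ht Hv; apply (sat_subteam _ _ _ Ht); intros w ->; exact Hv. Qed.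

Lemma sat_single_Var v p : sat (single v) (Var p) <-> v p = true.
Proof. split; [intros H; apply H; reflexivity|intros H w ->; exact H]. Qed.

Lemma sat_single_Neg v a : sat (single v) (Neg a) <-> ~ sat (single v) a.
Proof. split; [intros H; apply H; reflexivity|intros H w ->; exact H]. Qed.

Lemma sat_single_Or v a b :
  sat (single v) (Or a b) <-> sat (single v) a \/ sat (single v) b.
Proof.
  split.
  - intros [s [u [Hsu [Hs Hu]]]].
    destruct (proj1 (Hsu v) eq_refl); [left|right]; eapply sat_single_subteam; eauto.
  - intros [Ha|Hb].
    + exists (single v), (fun _ => False); split; [intros w; tauto|].
      split; [exact Ha|now apply sat_empty].
    + exists (fun _ => False), (single v); split; [intros w; tauto|].
      split; [now apply sat_empty|exact Hb].
Qed.

Lemma sat_classical a t : classical a ->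
  (forall v, t v -> sat (single v) a) -> sat t a.
Proof.
  revert t; induction a; simpl; intros t Ca Ht.
  1-3: intros v Hv; exact (Ht v Hv v eq_refl).
  - destruct Ca; split; [apply IHa1|apply IHa2]; firstorder.
  - destruct Ca as [Ca1 Ca2].
    exists (fun v => t v /\ sat (single v) a1), (fun v => t v /\ sat (single v) a2).
    split; [|split; [apply IHa1|apply IHa2]; tauto].
    intros v; split; [|tauto].
    intros Hv; pose proof (proj1 (sat_single_Or v a1 a2) (Ht v Hv)); tauto.
  - contradiction.
Qed.

(* [split_sat t D]: [t] is a union of subteams satisfying the members of [D]
   one by one; unlike [sat t (bigvee D)] it is invariant under permutation of [D]. *)
Fixpoint split_sat (t : team) (D : list form) : Prop :=
  match D with
  | [] => forall v, ~ t v
  | a :: D => exists s u : team,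
      (forall v, t v <-> s v \/ u v) /\ sat s a /\ split_sat u D
  end.

Lemma split_sat_of_bigvee D t : sat t (bigvee D) -> split_sat t D.
Proof.
  revert t; induction D as [|a [|b D] IH]; intros t H.
  - exact H.
  - exists t, (fun _ => False); split; [intros v; tauto|split; [exact H|simpl; auto]].
  - destruct H as [s [u [Hsu [Hs Hu]]]]; exists s, u; auto.
Qed.

Lemma split_sat_subteam D t t' :
  split_sat t D -> (forall v, t' v -> t v) -> split_sat t' D.
Proof.
  revert t t'; induction D as [|a D IH]; simpl; intros t t' Ht Hsub.
  - intros v Hv; exact (Ht v (Hsub v Hv)).
  - destruct Ht as [s [u [Hsu [Hs Hu]]]].
    exists (fun v => s v /\ t' v), (fun v => u v /\ t' v); split; [|split].
    + intros v; split; [|intros [[]|[]]; auto].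
      intros Hv; destruct (proj1 (Hsu v) (Hsub v Hv)); tauto.
    + apply (sat_subteam _ s); [exact Hs|]; tauto.
    + apply (IH u); [exact Hu|]; tauto.
Qed.

Lemma split_sat_perm D D' t : Permutation D D' -> split_sat t D -> split_sat t D'.
Proof.
  intros HP; revert t; induction HP; intros t H.
  - exact H.
  - destruct H as [s [u [Hsu [Hs Hu]]]]; exists s, u; auto.
  - destruct H as [s1 [u1 [H1 [Hs1 [s2 [u2 [H2 [Hs2 Hu2]]]]]]]].
    exists s2, (fun v => s1 v \/ u2 v); split; [|split; [exact Hs2|]].
    + intros v; specialize (H1 v); specialize (H2 v); tauto.
    + exists s1, u2; split; [intros v; tauto|auto].
  - auto.
Qed.

Lemma split_sat_single D v :
  split_sat (single v) D -> exists d, In d D /\ sat (single v) d.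
Proof.
  induction D as [|a D IH]; simpl; intros H.
  - contradiction (H v eq_refl).
  - destruct H as [s [u [Hsu [Hs Hu]]]].
    destruct (proj1 (Hsu v) eq_refl) as [Hv|Hv].
    + exists a; split; [now left|exact (sat_single_subteam _ _ _ Hs Hv)].
    + destruct IH as [d [Hd Hsd]].
      { apply (split_sat_subteam _ u); [exact Hu|]. now intros w ->. }
      exists d; auto.
Qed.

Lemma sat_fill_mono c x y : (forall t, sat t x -> sat t y) ->
  forall t, sat t (fill c x) -> sat t (fill c y).
Proof.
  intros Hxy; induction c; simpl; intros t H.
  1: auto.
  1-2: destruct H; split; auto.
  1-2: destruct H as [s [u [Hsu [Hs Hu]]]]; exists s, u; auto.
  1-2: destruct H; [left|right]; auto.
Qed.

Lemma sat_fill_Inq c a b t :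
  sat t (fill c (Inq a b)) -> sat t (fill c a) \/ sat t (fill c b).
Proof.
  revert t; induction c; simpl; intros t H.
  - exact H.
  - destruct H as [H1 H2]; destruct (IHc t H1); tauto.
  - destruct H as [H1 H2]; destruct (IHc t H2); tauto.
  - destruct H as [s [u [Hsu [Hs Hu]]]]; destruct (IHc s Hs);
      [left|right]; exists s, u; auto.
  - destruct H as [s [u [Hsu [Hs Hu]]]]; destruct (IHc u Hu);
      [left|right]; exists s, u; auto.
  - destruct H as [H|H]; [destruct (IHc t H)|]; tauto.
  - destruct H as [H|H]; [|destruct (IHc t H)]; tauto.
Qed.

Lemma wf_classical_or_fill_Inq f : wf f -> classical f \/
  exists c a b, f = fill c (Inq a b) /\ wf (fill c a) /\ wf (fill c b).
Proof.
  induction f; simpl; intros Wf; try tauto.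
  - destruct Wf as [W1 W2].
    destruct (IHf1 W1) as [C1|[c [a [b [-> Wc]]]]].
    + destruct (IHf2 W2) as [C2|[c [a [b [-> Wc]]]]]; [tauto|].
      right; exists (CAndR f1 c), a, b; simpl; tauto.
    + right; exists (CAndL c f2), a, b; simpl; tauto.
  - destruct Wf as [W1 W2].
    destruct (IHf1 W1) as [C1|[c [a [b [-> Wc]]]]].
    + destruct (IHf2 W2) as [C2|[c [a [b [-> Wc]]]]]; [tauto|].
      right; exists (COrR f1 c), a, b; simpl; tauto.
    + right; exists (COrL c f2), a, b; simpl; tauto.
  - right; exists Hole, f1, f2; simpl; tauto.
Qed.

Lemma list_focus {A} (P : A -> Prop) (l : list A) :
  (forall x, In x l -> P x) \/ exists x l', Permutation l (x :: l') /\ ~ P x.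
Proof.
  induction l as [|a l [IH|[x [l' [Hl Hx]]]]].
  - left; intros x [].
  - destruct (classic (P a)) as [Ha|Ha].
    + left; intros x [<-|Hx]; auto.
    + right; exists a, l; auto.
  - right; exists x, (a :: l'); split; [|exact Hx].
    transitivity (a :: x :: l'); [now apply perm_skip|apply perm_swap].
Qed.

Lemma forall_In_perm_cons {A} (P : A -> Prop) l l' x :
  Permutation l (x :: l') -> (forall y, In y l -> P y) ->
  P x /\ (forall y, In y l' -> P y).
Proof.
  intros Hl H; split; [|intros y Hy]; apply H, (Permutation_in _ (Permutation_sym Hl)).
  - now left.
  - now right.
Qed.

Fixpoint fsize (f : form) : nat :=
  match f with
  | Var _ | Bot => 1
  | Neg a => S (fsize a)
  | And a b | Or a b | Inq a b => S (fsize a + fsize b)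
  end.

Definition seq_size (G D : list form) : nat :=
  list_sum (map fsize G) + list_sum (map fsize D).

Lemma seq_size_perm G G' D D' :
  Permutation G G' -> Permutation D D' -> seq_size G D = seq_size G' D'.
Proof.
  intros HG HD; unfold seq_size.
  now rewrite (Permutation_list_sum (Permutation_map fsize HG)),
              (Permutation_list_sum (Permutation_map fsize HD)).
Qed.

Lemma seq_size_ind (P : list form -> list form -> Prop) :
  (forall G D, (forall G' D', seq_size G' D' < seq_size G D -> P G' D') -> P G D) ->
  forall G D, P G D.
Proof.
  intros H G D; remember (seq_size G D) as n eqn:En; revert G D En.
  induction n as [n IH] using lt_wf_ind; intros G D ->.
  apply H; intros G' D' Hlt; exact (IH _ Hlt G' D' eq_refl).
Qed.

Lemma fsize_fill_Inq c a b :
  fsize (fill c a) < fsize (fill c (Inq a b)) /\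
  fsize (fill c b) < fsize (fill c (Inq a b)).
Proof. induction c; simpl; lia. Qed.

Lemma GT_perm_l G G' D : Permutation G G' -> GT G D -> GT G' D.
Proof. intros HP H; exact (gt_perm _ _ _ _ H HP (Permutation_refl D)). Qed.

Lemma GT_perm_r G D D' : Permutation D D' -> GT G D -> GT G D'.
Proof. intros HP H; exact (gt_perm _ _ _ _ H (Permutation_refl G) HP). Qed.

Lemma GT_ax_In G D p : In (Var p) G -> In (Var p) D -> GT G D.
Proof.
  intros HG HD.
  destruct (in_split _ _ HG) as [G1 [G2 ->]], (in_split _ _ HD) as [D1 [D2 ->]].
  apply (gt_perm _ _ _ _ (gt_ax (G1 ++ G2) (D1 ++ D2) p)); apply Permutation_middle.
Qed.

Definition pointwise_valid (G D : list form) : Prop :=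
  forall v, (forall g, In g G -> sat (single v) g) ->
  exists d, In d D /\ sat (single v) d.

Lemma pointwise_valid_perm G G' D D' :
  Permutation G G' -> Permutation D D' -> pointwise_valid G D -> pointwise_valid G' D'.
Proof.
  intros HG HD HV v Hv.
  destruct (HV v) as [d [Hd Hsd]].
  - intros g Hg; apply Hv, (Permutation_in _ HG Hg).
  - exists d; split; [exact (Permutation_in _ HD Hd)|exact Hsd].
Qed.

Lemma pointwise_valid_NegL a G D :
  pointwise_valid (Neg a :: G) D -> pointwise_valid G (a :: D).
Proof.
  intros HV v Hv.
  destruct (classic (sat (single v) a)) as [Ha|Ha]; [exists a; now split; [left|]|].
  destruct (HV v) as [d [Hd Hsd]]; [|exists d; now split; [right|]].
  intros g [<-|Hg]; [now apply sat_single_Neg|auto].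
Qed.

Lemma pointwise_valid_NegR a G D :
  pointwise_valid G (Neg a :: D) -> pointwise_valid (a :: G) D.
Proof.
  intros HV v Hv.
  destruct (HV v) as [d [[<-|Hd] Hsd]]; [intros g Hg; apply Hv; now right| |eauto].
  apply sat_single_Neg in Hsd; contradiction (Hsd (Hv a (or_introl eq_refl))).
Qed.

Lemma pointwise_valid_AndL a b G D :
  pointwise_valid (And a b :: G) D -> pointwise_valid (a :: b :: G) D.
Proof.
  intros HV v Hv; apply HV.
  intros g [<-|Hg]; [split|]; apply Hv; simpl; auto.
Qed.

Lemma pointwise_valid_AndR a b G D :
  pointwise_valid G (And a b :: D) ->
  pointwise_valid G (a :: D) /\ pointwise_valid G (b :: D).
Proof.
  intros HV; split; intros v Hv;
    destruct (HV v Hv) as [d [[<-|Hd] Hsd]]; firstorder.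
Qed.

Lemma pointwise_valid_OrL a b G D :
  pointwise_valid (Or a b :: G) D ->
  pointwise_valid (a :: G) D /\ pointwise_valid (b :: G) D.
Proof.
  intros HV; split; intros v Hv; apply HV;
    intros g [<-|Hg]; try (apply sat_single_Or); firstorder.
Qed.

Lemma pointwise_valid_OrR a b G D :
  pointwise_valid G (Or a b :: D) -> pointwise_valid G (a :: b :: D).
Proof.
  intros HV v Hv; destruct (HV v Hv) as [d [[<-|Hd] Hsd]].
  - apply sat_single_Or in Hsd; firstorder.
  - exists d; simpl; auto.
Qed.

Lemma form_eq_dec (x y : form) : {x = y} + {x <> y}.
Proof. decide equality; apply Nat.eq_dec. Qed.

Definition atoms_true (G : list form) : valuation :=
  fun p => if in_dec form_eq_dec (Var p) G then true else false.

Lemma pointwise_valid_atomic G D :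
  (forall g, In g G -> exists p, g = Var p) ->
  (forall d, In d D -> (exists p, d = Var p) \/ d = Bot) ->
  pointwise_valid G D -> exists p, In (Var p) G /\ In (Var p) D.
Proof.
  intros GA DA HV.
  destruct (HV (atoms_true G)) as [d [Hd Hsd]].
  - intros g Hg; destruct (GA g Hg) as [p ->].
    apply sat_single_Var; unfold atoms_true.
    now destruct (in_dec form_eq_dec (Var p) G).
  - destruct (DA d Hd) as [[p ->]| ->]; [|contradiction (Hsd _ eq_refl)].
    apply sat_single_Var in Hsd; unfold atoms_true in Hsd.
    destruct (in_dec form_eq_dec (Var p) G); [now exists p|discriminate].
Qed.

Lemma GT_complete_classical : forall G D,
  all_classical G -> all_classical D -> pointwise_valid G D -> GT G D.
Proof.
  intros G D; pattern G, D; apply seq_size_ind; clear G D; intros G D IH HG HD HV.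
  destruct (list_focus (fun g => exists p, g = Var p) G) as [GA|[x [G' [HG' Hx]]]].
  - destruct (list_focus (fun d => (exists p, d = Var p) \/ d = Bot) D)
      as [DA|[x [D' [HD' Hx]]]].
    + destruct (pointwise_valid_atomic G D GA DA HV) as [p [HpG HpD]].
      exact (GT_ax_In G D p HpG HpD).
    + apply (GT_perm_r _ _ _ (Permutation_sym HD')).
      rewrite (seq_size_perm _ _ _ _ (Permutation_refl G) HD') in IH.
      apply (pointwise_valid_perm _ _ _ _ (Permutation_refl G) HD') in HV.
      destruct (forall_In_perm_cons _ _ _ _ HD' HD) as [Cx HD''].
      destruct x as [p| |a|a b|a b|a b]; simpl in Cx.
      * exfalso; eauto.
      * exfalso; auto.
      * apply gt_negR; [exact Cx|].
        apply IH; [unfold seq_size; simpl; lia|intros g [<-|]; auto|exact HD''|].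
        now apply pointwise_valid_NegR.
      * destruct Cx as [Ca Cb], (pointwise_valid_AndR _ _ _ _ HV) as [HVa HVb].
        rewrite <- (app_nil_r D'); apply gt_andR; [exact HD''|..];
          (apply IH; [unfold seq_size; simpl; lia|exact HG|intros d [<-|]; auto|auto]).
      * destruct Cx as [Ca Cb]; apply gt_orR, IH; [unfold seq_size; simpl; lia|exact HG| |].
        -- intros d [<-|[<-|]]; auto.
        -- now apply pointwise_valid_OrR.
      * contradiction.
  - apply (GT_perm_l _ _ _ (Permutation_sym HG')).
    rewrite (seq_size_perm _ _ _ _ HG' (Permutation_refl D)) in IH.
    apply (pointwise_valid_perm _ _ _ _ HG' (Permutation_refl D)) in HV.
    destruct (forall_In_perm_cons _ _ _ _ HG' HG) as [Cx HG''].
    destruct x as [p| |a|a b|a b|a b]; simpl in Cx.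
    + exfalso; eauto.
    + apply gt_bot.
    + apply gt_negL; [exact Cx|].
      apply IH; [unfold seq_size; simpl; lia|exact HG''|intros d [<-|]; auto|].
      now apply pointwise_valid_NegL.
    + destruct Cx as [Ca Cb]; apply gt_andL, IH; [unfold seq_size; simpl; lia| |exact HD|].
      * intros g [<-|[<-|]]; auto.
      * now apply pointwise_valid_AndL.
    + destruct Cx as [Ca Cb], (pointwise_valid_OrL _ _ _ _ HV) as [HVa HVb].
      rewrite <- (app_nil_r D); apply gt_orL; [exact HD|..];
        (apply IH; [unfold seq_size; simpl; lia|intros g [<-|]; auto|exact HD|auto]).
    + contradiction.
Qed.

Definition team_valid (G D : list form) : Prop :=
  forall t, (forall g, In g G -> sat t g) -> split_sat t D.

Lemma team_valid_perm G G' D D' :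
  Permutation G G' -> Permutation D D' -> team_valid G D -> team_valid G' D'.
Proof.
  intros HG HD HV t Ht; apply (split_sat_perm _ _ _ HD), HV.
  intros g Hg; apply Ht, (Permutation_in _ HG Hg).
Qed.

Lemma team_valid_of_entails G D : entails G (bigvee D) -> team_valid G D.
Proof.
  intros HE t Ht; apply split_sat_of_bigvee.
  apply (HE (fun _ => True) t); [|intros; exact I|exact Ht].
  intros v _ p Hp; contradiction (Hp I).
Qed.

Lemma pointwise_valid_of_team_valid G D : team_valid G D -> pointwise_valid G D.
Proof. intros HV v Hv; apply split_sat_single, HV, Hv. Qed.

Lemma team_valid_InqL c a b G D :
  team_valid (fill c (Inq a b) :: G) D ->
  team_valid (fill c a :: G) D /\ team_valid (fill c b :: G) D.
Proof.
  intros HV; split; intros t Ht; apply HV; intros g [<-|Hg];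
    try exact (Ht g (or_intror Hg));
    apply (sat_fill_mono c) with (2 := Ht _ (or_introl eq_refl)); simpl; auto.
Qed.

Definition models (G : list form) : team :=
  fun v => forall g, In g G -> sat (single v) g.

Lemma team_valid_InqR c a b G D : all_classical G ->
  team_valid G (fill c (Inq a b) :: D) ->
  team_valid G (fill c a :: D) \/ team_valid G (fill c b :: D).
Proof.
  intros HG HV.
  destruct (HV (models G)) as [s [u [Hsu [Hs Hu]]]].
  { intros g Hg; apply sat_classical; [now apply HG|]; intros v Hv; exact (Hv g Hg). }
  assert (Hs_valid : forall x, sat s x -> team_valid G (x :: D)).
  { intros x Hx t Ht; apply (split_sat_subteam _ (models G)); [exists s, u; auto|].
    intros v Hv g Hg; exact (sat_single_subteam _ _ _ (Ht g Hg) Hv). }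
  destruct (sat_fill_Inq c a b s Hs); [left|right]; auto.
Qed.

Lemma GT_complete : forall G D,
  (forall f, In f G -> wf f) -> (forall f, In f D -> wf f) -> team_valid G D -> GT G D.
Proof.
  intros G D; pattern G, D; apply seq_size_ind; clear G D; intros G D IH HG HD HV.
  destruct (list_focus classical G) as [GC|[x [G' [HG' Hx]]]].
  - destruct (list_focus classical D) as [DC|[x [D' [HD' Hx]]]].
    + apply GT_complete_classical; auto.
      now apply pointwise_valid_of_team_valid.
    + apply (GT_perm_r _ _ _ (Permutation_sym HD')).
      rewrite (seq_size_perm _ _ _ _ (Permutation_refl G) HD') in IH.
      apply (team_valid_perm _ _ _ _ (Permutation_refl G) HD') in HV.
      destruct (forall_In_perm_cons _ _ _ _ HD' HD) as [Wx HD''].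
      destruct (wf_classical_or_fill_Inq x Wx) as [|[c [a [b [-> [Wa Wb]]]]]];
        [contradiction|].
      destruct (fsize_fill_Inq c a b) as [Hsa Hsb].
      destruct (team_valid_InqR c a b G D' GC HV) as [HVa|HVb];
        [apply gt_inqR1|apply gt_inqR2];
        (apply IH; [unfold seq_size; simpl; lia|exact HG|intros d [<-|]; auto|auto]).
  - apply (GT_perm_l _ _ _ (Permutation_sym HG')).
    rewrite (seq_size_perm _ _ _ _ HG' (Permutation_refl D)) in IH.
    apply (team_valid_perm _ _ _ _ HG' (Permutation_refl D)) in HV.
    destruct (forall_In_perm_cons _ _ _ _ HG' HG) as [Wx HG''].
    destruct (wf_classical_or_fill_Inq x Wx) as [|[c [a [b [-> [Wa Wb]]]]]];
      [contradiction|].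
    destruct (fsize_fill_Inq c a b) as [Hsa Hsb].
    destruct (team_valid_InqL c a b G' D HV) as [HVa HVb].
    apply gt_inqL;
      (apply IH; [unfold seq_size; simpl; lia|intros g [<-|]; auto|exact HD|auto]).
Qed.

Theorem theorem6p9 : forall (G D : list form),
  (forall f, In f G -> wf f) ->
  (forall f, In f D -> wf f) ->
  entails G (bigvee D) ->
  GT G D.
Proof.
  intros G D HG HD HE.
  exact (GT_complete G D HG HD (team_valid_of_entails G D HE)).
Qed.
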